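(* Let $R\ge1$, $k\in\mathbb N$ and $a,b\in B^{\omega_k}_R(e)\cap\mathcal B^{\mathbb C}_{TM}$. Let $0<\varepsilon<1$ with $\|a\|_{\omega_k}+\|b\|_{\omega_k}+2\varepsilon<R$, and let $c,d\in\mathbb C^{\mathcal T_0}(\omega_k)$ with $c(\emptyset)=d(\emptyset)=0$ and $\|c\|_{\omega_k},\|d\|_{\omega_k}<\varepsilon$. Then $a+c,\,b+d\in\mathcal B^{\mathbb C}_{TM}$ and for every $\tau\in\mathcal T$ $$\big|\big((a+c)\cdot(b+d)-a\cdot b\big)(\tau)\big|\le 2\varepsilon\,\frac{(4R)^{|\tau|}}{\omega_k(\tau)}.$$
   Context: $\mathcal T$ is the set of rooted trees (at least one vertex), $\mathcal T_0=\mathcal T\cup\{\emptyset\}$, $|\tau|$ the number of vertices. $\mathrm{OST}(\tau)$ is the set of ordered subtrees (vertex subsets connected by edges of $\tau$ and containing the root if nonempty), $s_\tau$ the induced rooted tree, $\tau\setminus s$ the forest obtained by deleting $s$ and adjacent edges. $\mathcal B^{\mathbb C}_{TM}$ is the set of $a\colon\mathcal T_0\to\mathbb C$ with $a(\emptyset)=1$ and $|a(\tau)|\le CK^{|\tau|}$ for some $C,K>0$, with product $(a\cdot b)(\tau)=\sum_{s\in\mathrm{OST}(\tau)}b(s_\tau)\prod_{\theta\in\tau\setminus s}a(\theta)$ and unit $e$ ($e(\emptyset)=1$, else $0$). $\omega_k(\tau)=2^{-k|\tau|}$, $\mathbb C^{\mathcal T_0}(\omega_k)=\{a\mid\|a\|_{\omega_k}:=\sup_{\tau\in\mathcal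 T_0}|a(\tau)|\omega_k(\tau)<\infty\}$, and $B^{\omega_k}_R(x)$ is the open $R$-ball about $x$ in this Banach space. *)

From Stdlib Require Import Reals List Permutation ClassicalEpsilon.
Import ListNotations.
Open Scope R_scope.

Record Cx := mkC { Re : R; Im : R }.
Definition C0 : Cx := mkC 0 0.
Definition C1 : Cx := mkC 1 0.
Definition Cadd (x y : Cx) : Cx := mkC (Re x + Re y) (Im x + Im y).
Definition Copp (x : Cx) : Cx := mkC (- Re x) (- Im x).
Definition Csub (x y : Cx) : Cx := Cadd x (Copp y).
Definition Cmul (x y : Cx) : Cx :=
  mkC (Re x * Re y - Im x * Im y) (Re x * Im y + Im x * Re y).
Definition Cmod (x : Cx) : R := sqrt (Re x * Re x + Im x * Im x).

(* Planar representatives; a rooted (non-planar) tree is an isomorphism class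
   under [tiso] (permutation of children, recursively). *)
Inductive tree : Type := Node : list tree -> tree.

Inductive tiso : tree -> tree -> Prop :=
| tiso_node : forall ts vs us,
    Permutation ts vs -> Forall2 tiso vs us -> tiso (Node ts) (Node us).

(* T_0 = option tree, None = empty tree *)
Definition T0 := option tree.

Fixpoint tsize (t : tree) : nat :=
  match t with Node ts => S (fold_right (fun u n => (tsize u + n)%nat) 0%nat ts) end.

Definition osize (t : T0) : nat :=
  match t with None => 0%nat | Some u => tsize u end.

Definition opt_cons (x : option tree) (l : list tree) : list tree :=
  match x with None => l | Some y => y :: l end.

(* [cuts t] enumerates, once each, the ordered subtrees s of t as pairs
   (s_t, t \ s): s_t is None for the empty subtree, and t \ s is the forest
   (list of trees) obtained by removing s and the adjacent edges. *)
Fixpoint cuts (t : tree) : list (option tree * list tree) :=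
  match t with
  | Node ts =>
      let fix go (l : list tree) : list (list tree * list tree) :=
        match l with
        | [] => [([], [])]
        | t1 :: l' =>
            flat_map (fun p => map (fun q => (opt_cons (fst p) (fst q), snd p ++ snd q))
                                   (go l'))
                     (cuts t1)
        end in
      (None, [t]) :: map (fun p => (Some (Node (fst p)), snd p)) (go ts)
  end.

Definition respects_iso (a : T0 -> Cx) : Prop :=
  forall t u, tiso t u -> a (Some t) = a (Some u).

Definition Csum (l : list Cx) : Cx := fold_right Cadd C0 l.
Definition Cprod (l : list Cx) : Cx := fold_right Cmul C1 l.

Definition tm_prod (a b : T0 -> Cx) (t : T0) : Cx :=
  match t with
  | None => b None
  | Some u => Csum (map (fun p => Cmul (b (fst p)) (Cprod (map (fun th => a (Some th)) (snd p))))
                        (cuts u))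
  end.

Definition e_unit (t : T0) : Cx := match t with None => C1 | Some _ => C0 end.

Definition fadd (a b : T0 -> Cx) : T0 -> Cx := fun t => Cadd (a t) (b t).
Definition fsub (a b : T0 -> Cx) : T0 -> Cx := fun t => Csub (a t) (b t).

Definition in_BTM (a : T0 -> Cx) : Prop :=
  respects_iso a /\ a None = C1 /\
  exists Cc K, 0 < Cc /\ 0 < K /\ forall t, Cmod (a t) <= Cc * K ^ (osize t).

Definition omega (k : nat) (t : T0) : R := (/ 2) ^ (k * osize t).

Definition wvalues (k : nat) (a : T0 -> Cx) : R -> Prop :=
  fun x => exists t, x = Cmod (a t) * omega k t.

Definition in_wspace (k : nat) (a : T0 -> Cx) : Prop :=
  respects_iso a /\ exists M, forall t, Cmod (a t) * omega k t <= M.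

(* ||a||_{omega_k} := sup_t |a(t)| omega_k(t) (meaningful when in_wspace) *)
Definition wnorm (k : nat) (a : T0 -> Cx) : R :=
  epsilon (inhabits 0) (fun r => is_lub (wvalues k a) r).

Definition in_ball (k : nat) (Rr : R) (x a : T0 -> Cx) : Prop :=
  in_wspace k (fsub a x) /\ wnorm k (fsub a x) < Rr.

(* Write [n = |tau|] and [g = 2^k], so that [1 / omega_k(tau) = g^n].  The ball
   and norm hypotheses give [|a(t)|, |a(t) + c(t)|, |b(t)| <= R g^|t|] and
   [|c(t)|, |d(t)| <= eps g^|t|].  For each of the at most [2^n] ordered
   subtrees [s] of [tau], the term [(b+d)(s) prod (a+c)(theta) - b(s) prod a(theta)]
   is controlled by telescoping over its at most [n] factors, each of total
   weight [g^n], which gives [n eps R^n g^n <= eps (2R)^n g^n]; summing over [s]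
   gives [eps (4R)^n g^n]. *)
From Pilot Require Import Defs.
From Stdlib Require Import Reals Lra Lia List ClassicalEpsilon.
From Coquelicot Require Complex.
Import ListNotations.
Open Scope R_scope.

Lemma Cx_ext x y : Re x = Re y -> Im x = Im y -> x = y.
Proof. destruct x, y; simpl; intros; subst; reflexivity. Qed.

Definition Cx_to_C (x : Cx) : Complex.C := (Re x, Im x).

Lemma Cmod_Cx_to_C x : Cmod x = Complex.Cmod (Cx_to_C x).
Proof. unfold Cmod, Complex.Cmod; simpl; f_equal; ring. Qed.

Lemma Cmod_ge0 x : 0 <= Cmod x.
Proof. apply sqrt_pos. Qed.

Lemma Cmod_C0 : Cmod C0 = 0.
Proof. rewrite Cmod_Cx_to_C; apply Complex.Cmod_0. Qed.

Lemma Cmod_C1 : Cmod Defs.C1 = 1.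
Proof. rewrite Cmod_Cx_to_C; apply Complex.Cmod_1. Qed.

Lemma Cmod_mul x y : Cmod (Cmul x y) = Cmod x * Cmod y.
Proof. rewrite !Cmod_Cx_to_C; exact (Complex.Cmod_mult (Cx_to_C x) (Cx_to_C y)). Qed.

Lemma Cmod_add x y : Cmod (Cadd x y) <= Cmod x + Cmod y.
Proof. rewrite !Cmod_Cx_to_C; exact (Complex.Cmod_triangle (Cx_to_C x) (Cx_to_C y)). Qed.

Lemma Csub_diag x : Csub x x = C0.
Proof. apply Cx_ext; simpl; ring. Qed.

Lemma Csub_addl x y : Csub (Cadd x y) x = y.
Proof. apply Cx_ext; simpl; ring. Qed.

Lemma Cmod_sub_le x y : Cmod x <= Cmod (Csub x y) + Cmod y.
Proof.
  replace x with (Cadd (Csub x y) y) at 1 by (apply Cx_ext; simpl; ring).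
  apply Cmod_add.
Qed.

Lemma Cmul_sub_le x x' y y' :
  Cmod (Csub (Cmul x' y') (Cmul x y)) <=
  Cmod (Csub x' x) * Cmod y' + Cmod x * Cmod (Csub y' y).
Proof.
  replace (Csub (Cmul x' y') (Cmul x y))
    with (Cadd (Cmul (Csub x' x) y') (Cmul x (Csub y' y)))
    by (apply Cx_ext; simpl; ring).
  rewrite <- !Cmod_mul; apply Cmod_add.
Qed.

Definition Rprod (l : list R) : R := fold_right Rmult 1 l.

Section SumsAndProducts.
Variable A : Type.

Lemma Csum_sub_le (F G : A -> Cx) (l : list A) (M : R) :
  (forall x, In x l -> Cmod (Csub (F x) (G x)) <= M) ->
  Cmod (Csub (Csum (map F l)) (Csum (map G l))) <= INR (length l) * M.
Proof.
  induction l as [|x l IH]; intros HM; cbn [map length].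
  - rewrite Csub_diag, Cmod_C0; simpl; lra.
  - change (Csum (?y :: ?l')) with (Cadd y (Csum l')).
    replace (Csub (Cadd (F x) (Csum (map F l))) (Cadd (G x) (Csum (map G l))))
      with (Cadd (Csub (F x) (G x)) (Csub (Csum (map F l)) (Csum (map G l))))
      by (apply Cx_ext; simpl; ring).
    rewrite S_INR.
    specialize (IH (fun y Hy => HM y (or_intror Hy))).
    specialize (HM x (or_introl eq_refl)).
    pose proof (Cmod_add (Csub (F x) (G x)) (Csub (Csum (map F l)) (Csum (map G l)))).
    lra.
Qed.

Variables (F G : A -> Cx) (M : A -> R).
Hypothesis HF : forall x, Cmod (F x) <= M x.

Lemma Cprod_le l : Cmod (Cprod (map F l)) <= Rprod (map M l).
Proof.
  induction l as [|x l IH]; simpl.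
  - rewrite Cmod_C1; lra.
  - rewrite Cmod_mul.
    apply Rmult_le_compat; auto using Cmod_ge0.
Qed.

Lemma Cprod_sub_le (e : R) l :
  0 <= e ->
  (forall x, Cmod (G x) <= M x) ->
  (forall x, Cmod (Csub (F x) (G x)) <= e * M x) ->
  Cmod (Csub (Cprod (map F l)) (Cprod (map G l))) <= INR (length l) * e * Rprod (map M l).
Proof.
  intros He HG HFG.
  induction l as [|x l IH]; cbn [map length].
  - rewrite Csub_diag, Cmod_C0; simpl; lra.
  - change (Cprod (?y :: ?l')) with (Cmul y (Cprod l')).
    change (Rprod (?y :: ?l')) with (y * Rprod l').
    eapply Rle_trans; [apply Cmul_sub_le|].
    pose proof (Cprod_le l) as HP.
    pose proof (Rle_trans _ _ _ (Cmod_ge0 _) HP) as HP0.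
    pose proof (Rle_trans _ _ _ (Cmod_ge0 _) (HG x)) as HM0.
    assert (Hhead : Cmod (Csub (F x) (G x)) * Cmod (Cprod (map F l))
                    <= e * M x * Rprod (map M l))
      by (apply Rmult_le_compat; auto using Cmod_ge0).
    assert (Htail : Cmod (G x) * Cmod (Csub (Cprod (map F l)) (Cprod (map G l)))
                    <= M x * (INR (length l) * e * Rprod (map M l)))
      by (apply Rmult_le_compat; auto using Cmod_ge0).
    rewrite S_INR.
    replace ((INR (length l) + 1) * e * (M x * Rprod (map M l)))
      with (e * M x * Rprod (map M l) + M x * (INR (length l) * e * Rprod (map M l)))
      by ring.
    lra.
Qed.

End SumsAndProducts.

Lemma INR_le_pow2 n : INR n <= 2 ^ n.
Proof.
  induction n as [|n IH]; [simpl; lra|].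
  rewrite S_INR; simpl pow.
  pose proof (pow_R1_Rle 2 n ltac:(lra)); lra.
Qed.

Lemma INR_mul_pow_le (m n : nat) x :
  (m <= n)%nat -> 1 <= x -> INR m * x ^ m <= INR n * x ^ n.
Proof.
  intros Hmn Hx.
  apply Rmult_le_compat; auto using pos_INR, le_INR, Rle_pow.
  apply pow_le; lra.
Qed.

Lemma tree_ind' (P : tree -> Prop) :
  (forall ts, Forall P ts -> P (Node ts)) -> forall t, P t.
Proof.
  intros H. fix IH 1. intros [ts]. apply H.
  induction ts as [|t ts IHts]; constructor; [apply IH | apply IHts].
Qed.

Definition forest_size (l : list tree) : nat :=
  fold_right (fun u n => (tsize u + n)%nat) 0%nat l.

(* The local [go] of [cuts], named so that it can be reasoned about. *)
Fixpoint forest_cuts (l : list tree) : list (list tree * list tree) :=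
  match l with
  | [] => [([], [])]
  | t1 :: l' =>
      flat_map (fun p => map (fun q => (opt_cons (fst p) (fst q), snd p ++ snd q))
                             (forest_cuts l'))
               (cuts t1)
  end.

Lemma cuts_Node ts : cuts (Node ts) =
  (None, [Node ts]) :: map (fun p => (Some (Node (fst p)), snd p)) (forest_cuts ts).
Proof. reflexivity. Qed.

Lemma tsize_Node ts : tsize (Node ts) = S (forest_size ts).
Proof. reflexivity. Qed.

Lemma forest_size_app l1 l2 :
  forest_size (l1 ++ l2) = (forest_size l1 + forest_size l2)%nat.
Proof. induction l1; simpl; lia. Qed.

Lemma forest_size_opt_cons o l :
  forest_size (opt_cons o l) = (osize o + forest_size l)%nat.
Proof. destruct o; reflexivity. Qed.

Lemma tsize_pos t : (1 <= tsize t)%nat.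
Proof. destruct t; simpl; lia. Qed.

Lemma length_le_forest_size l : (length l <= forest_size l)%nat.
Proof. induction l as [|t l IH]; simpl; [lia|]. pose proof (tsize_pos t); lia. Qed.

Lemma length_flat_map_map {A B C} (g : A -> B -> C) (l : list A) (m : list B) :
  length (flat_map (fun p => map (g p) m) l) = (length l * length m)%nat.
Proof. induction l; simpl; [reflexivity|]. rewrite length_app, length_map; lia. Qed.

Lemma length_cuts t : (length (cuts t) <= 2 ^ tsize t)%nat.
Proof.
  induction t as [ts Hts] using tree_ind'.
  assert (Hforest : (length (forest_cuts ts) <= 2 ^ forest_size ts)%nat).
  { induction Hts as [|t1 l' H1 _ IH]; simpl; [lia|].
    rewrite length_flat_map_map, Nat.pow_add_r.
    apply Nat.mul_le_mono; assumption. }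
  rewrite cuts_Node, tsize_Node; simpl; rewrite length_map.
  pose proof (Nat.pow_nonzero 2 (forest_size ts)); lia.
Qed.

Lemma cuts_size t o f :
  In (o, f) (cuts t) -> (osize o + forest_size f)%nat = tsize t.
Proof.
  revert o f.
  induction t as [ts Hts] using tree_ind'.
  assert (Hforest : forall g f, In (g, f) (forest_cuts ts) ->
                      (forest_size g + forest_size f)%nat = forest_size ts).
  { induction Hts as [|t1 l' H1 _ IH]; simpl.
    - intros g f [[= <- <-]|[]]; reflexivity.
    - intros g f Hq.
      apply in_flat_map in Hq as [[o1 f1] [Hp Hq]].
      apply in_map_iff in Hq as [[g2 f2] [[= <- <-] Hq]].
      rewrite forest_size_opt_cons, forest_size_app.
      specialize (H1 _ _ Hp). specialize (IH _ _ Hq). lia. }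
  intros o f; rewrite cuts_Node.
  intros [[= <- <-]|Hp]; cbn [osize forest_size fold_right]; rewrite tsize_Node.
  - simpl; lia.
  - apply in_map_iff in Hp as [[g f'] [[= <- <-] Hq]].
    specialize (Hforest _ _ Hq); cbn [osize fst snd]; rewrite tsize_Node; lia.
Qed.

Definition wbounded (k : nat) (a : T0 -> Cx) : Prop :=
  exists M, forall t, Cmod (a t) * omega k t <= M.

Lemma omega_pos k t : 0 < omega k t.
Proof. unfold omega. apply pow_lt. lra. Qed.

Lemma omega_inv k t : / omega k t = (2 ^ k) ^ osize t.
Proof. unfold omega. rewrite pow_mult, !pow_inv, Rinv_inv. reflexivity. Qed.

Lemma wnorm_ge k a : wbounded k a -> forall t, Cmod (a t) * omega k t <= wnorm k a.
Proof.
  intros [M HM] t.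
  assert (Hbound : bound (wvalues k a)) by (exists M; intros x [u ->]; apply HM).
  assert (Hne : exists x, wvalues k a x) by (eexists; exists None; reflexivity).
  destruct (completeness _ Hbound Hne) as [m Hm].
  assert (Hlub : is_lub (wvalues k a) (wnorm k a))
    by (unfold wnorm; apply epsilon_spec; exists m; exact Hm).
  apply (proj1 Hlub). exists t; reflexivity.
Qed.

Lemma wnorm_ge0 k a : wbounded k a -> 0 <= wnorm k a.
Proof.
  intros H. eapply Rle_trans; [|apply (wnorm_ge k a H None)].
  apply Rmult_le_pos; [apply Cmod_ge0 | left; apply omega_pos].
Qed.

Lemma Cmod_le_weight k a r :
  wbounded k a -> wnorm k a <= r -> forall t, Cmod (a t) <= r * (2 ^ k) ^ osize t.
Proof.
  intros H Hr t.
  rewrite <- omega_inv.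
  pose proof (omega_pos k t).
  apply Rmult_le_reg_r with (omega k t); auto.
  rewrite Rmult_assoc, Rinv_l by lra.
  pose proof (wnorm_ge k a H t); lra.
Qed.

Lemma Cmod_add_le_weight k a c r :
  wbounded k a -> wbounded k c -> wnorm k a + wnorm k c <= r ->
  forall t, Cmod (fadd a c t) <= r * (2 ^ k) ^ osize t.
Proof.
  intros Ha Hc Hr t.
  pose proof (Cmod_le_weight k a _ Ha (Rle_refl _) t).
  pose proof (Cmod_le_weight k c _ Hc (Rle_refl _) t).
  pose proof (Cmod_add (a t) (c t)).
  assert (0 <= (r - wnorm k a - wnorm k c) * (2 ^ k) ^ osize t)
    by (apply Rmult_le_pos; [lra | apply pow_le, pow_le; lra]).
  unfold fadd; nra.
Qed.

Lemma in_ball_wbounded k Rr a : in_ball k Rr e_unit a -> wbounded k a.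
Proof.
  intros [[_ [M HM]] _]. exists (M + 1). intros t.
  pose proof (omega_pos k t).
  assert (He : Cmod (e_unit t) * omega k t <= 1).
  { destruct t; simpl.
    - rewrite Cmod_C0; lra.
    - rewrite Cmod_C1. unfold omega; simpl; rewrite Nat.mul_0_r; simpl; lra. }
  pose proof (HM t); pose proof (Cmod_sub_le (a t) (e_unit t)).
  unfold fsub in *; nra.
Qed.

Lemma in_BTM_add k a c :
  in_BTM a -> in_wspace k c -> c None = C0 -> in_BTM (fadd a c).
Proof.
  intros [Hai [Ha0 [Cc [K [HCc [HK Ha]]]]]] [Hci Hc] Hc0.
  unfold fadd; split; [|split].
  - intros t u Htu. rewrite (Hai t u Htu), (Hci t u Htu). reflexivity.
  - rewrite Ha0, Hc0. apply Cx_ext; simpl; ring.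
  - set (Mc := wnorm k c). set (L := Rmax K (2 ^ k)).
    assert (HMc : 0 <= Mc) by apply (wnorm_ge0 k c Hc).
    exists (Cc + Mc), L; split; [lra|]; split.
    { unfold L; pose proof (Rmax_l K (2 ^ k)); lra. }
    intros t.
    assert (HKL : Cc * K ^ osize t <= Cc * L ^ osize t)
      by (apply Rmult_le_compat_l, pow_incr; [|split; [|apply Rmax_l]]; lra).
    assert (H2L : Mc * (2 ^ k) ^ osize t <= Mc * L ^ osize t)
      by (apply Rmult_le_compat_l, pow_incr; [|split; [apply pow_le|apply Rmax_r]]; lra).
    pose proof (Cmod_add (a t) (c t)); pose proof (Ha t).
    pose proof (Cmod_le_weight k c Mc Hc (Rle_refl _) t).
    lra.
Qed.

Section Perturbation.
Variables (a a' b b' : T0 -> Cx) (Rr eps g : R).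
Hypotheses (HRr : 1 <= Rr) (Heps : 0 <= eps) (Hg : 0 <= g).
Hypothesis Ha : forall t, Cmod (a (Some t)) <= Rr * g ^ tsize t.
Hypothesis Ha' : forall t, Cmod (a' (Some t)) <= Rr * g ^ tsize t.
Hypothesis Haa' : forall t, Cmod (Csub (a' (Some t)) (a (Some t))) <= eps * g ^ tsize t.
Hypothesis Hb : forall t, Cmod (b (Some t)) <= Rr * g ^ tsize t.
Hypothesis Hbb' : forall t, Cmod (Csub (b' (Some t)) (b (Some t))) <= eps * g ^ tsize t.
Hypothesis Hb0 : Cmod (b None) <= 1.
Hypothesis Hbb'0 : b' None = b None.

Let forest_prod (x : T0 -> Cx) (f : list tree) : Cx :=
  Cprod (map (fun th => x (Some th)) f).

Lemma Rprod_forest_weight f :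
  Rprod (map (fun th => Rr * g ^ tsize th) f) = Rr ^ length f * g ^ forest_size f.
Proof. induction f as [|t f IH]; simpl; [ring|]. rewrite IH, pow_add; ring. Qed.

Lemma forest_prod_le f : Cmod (forest_prod a' f) <= Rr ^ length f * g ^ forest_size f.
Proof. rewrite <- Rprod_forest_weight. apply Cprod_le; auto. Qed.

Lemma forest_prod_sub_le f :
  Cmod (Csub (forest_prod a' f) (forest_prod a f))
  <= INR (length f) * eps * (Rr ^ length f * g ^ forest_size f).
Proof.
  rewrite <- Rprod_forest_weight. apply Cprod_sub_le; auto.
  intros t. pose proof (Haa' t).
  assert (0 <= eps * g ^ tsize t) by (apply Rmult_le_pos; [lra | apply pow_le; lra]).
  nra.
Qed.

Lemma cut_term_sub_le tau o f :
  In (o, f) (cuts tau) ->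
  Cmod (Csub (Cmul (b' o) (forest_prod a' f)) (Cmul (b o) (forest_prod a f)))
  <= INR (tsize tau) * eps * Rr ^ tsize tau * g ^ tsize tau.
Proof.
  intros Hcut.
  pose proof (cuts_size _ _ _ Hcut) as Hsize.
  pose proof (length_le_forest_size f) as Hlen.
  pose proof (forest_prod_le f) as HX.
  pose proof (forest_prod_sub_le f) as HXX.
  pose proof (Cmod_ge0 (forest_prod a' f)).
  pose proof (Cmod_ge0 (Csub (forest_prod a' f) (forest_prod a f))).
  eapply Rle_trans; [apply Cmul_sub_le|].
  replace (INR (tsize tau) * eps * Rr ^ tsize tau * g ^ tsize tau)
    with (INR (tsize tau) * Rr ^ tsize tau * (eps * g ^ tsize tau)) by ring.
  assert (Hw : 0 <= eps * g ^ tsize tau) by (apply Rmult_le_pos; [lra | apply pow_le; lra]).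
  destruct o as [s|]; simpl in Hsize.
  - (* the subtree [s] is one more factor, on top of the forest *)
    pose proof (tsize_pos s).
    assert (Hg_n : g ^ tsize s * g ^ forest_size f = g ^ tsize tau)
      by (rewrite <- pow_add; f_equal; lia).
    assert (Hhead : Cmod (Csub (b' (Some s)) (b (Some s))) * Cmod (forest_prod a' f)
                 <= eps * g ^ tsize s * (Rr ^ length f * g ^ forest_size f))
      by (apply Rmult_le_compat; auto using Cmod_ge0).
    assert (Htail : Cmod (b (Some s)) * Cmod (Csub (forest_prod a' f) (forest_prod a f))
                 <= Rr * g ^ tsize s * (INR (length f) * eps * (Rr ^ length f * g ^ forest_size f)))
      by (apply Rmult_le_compat; auto using Cmod_ge0).
    eapply Rle_trans;
      [|apply Rmult_le_compat_r; [exact Hw | apply (INR_mul_pow_le (S (length f))); [lia | exact HRr]]].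
    rewrite S_INR, <- Hg_n; simpl pow.
    assert (0 <= Rr ^ length f) by (apply pow_le; lra).
    assert (0 <= eps * g ^ tsize s * (Rr ^ length f * g ^ forest_size f))
      by (apply Rmult_le_pos; [apply Rmult_le_pos; [lra | apply pow_le; lra] |
                               apply Rmult_le_pos; [lra | apply pow_le; lra]]).
    pose proof (pos_INR (length f)). nra.
  - rewrite Hbb'0, Csub_diag, Cmod_C0, Rmult_0_l, Rplus_0_l.
    rewrite Hsize in HXX.
    eapply Rle_trans; [apply Rmult_le_compat; [apply Cmod_ge0 | apply Cmod_ge0 | exact Hb0 | exact HXX]|].
    replace (1 * (INR (length f) * eps * (Rr ^ length f * g ^ tsize tau)))
      with (INR (length f) * Rr ^ length f * (eps * g ^ tsize tau)) by ring.
    apply Rmult_le_compat_r; [exact Hw|].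
    apply INR_mul_pow_le; [lia | exact HRr].
Qed.

Lemma tm_prod_sub_le tau :
  Cmod (fsub (tm_prod a' b') (tm_prod a b) (Some tau))
  <= eps * (4 * Rr) ^ tsize tau * g ^ tsize tau.
Proof.
  set (n := tsize tau).
  unfold fsub, tm_prod.
  eapply Rle_trans.
  { apply (Csum_sub_le _ _ _ _ (INR n * eps * Rr ^ n * g ^ n)).
    intros [o f] Hcut; apply (cut_term_sub_le _ _ _ Hcut). }
  assert (Hcount : INR (@length (T0 * list tree) (cuts tau)) <= 2 ^ n).
  { pose proof (le_INR _ _ (length_cuts tau)) as H.
    rewrite pow_INR in H; simpl INR in H. replace (1 + 1) with 2 in H by ring; exact H. }
  pose proof (INR_le_pow2 n).
  assert (Hw : 0 <= eps * Rr ^ n * g ^ n)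
    by (apply Rmult_le_pos; [apply Rmult_le_pos; [lra|] |]; apply pow_le; lra).
  replace (eps * (4 * Rr) ^ n * g ^ n) with (2 ^ n * 2 ^ n * (eps * Rr ^ n * g ^ n))
    by (replace 4 with (2 * 2) by ring; rewrite !Rpow_mult_distr; ring).
  apply Rle_trans with (INR (@length (T0 * list tree) (cuts tau)) * INR n * (eps * Rr ^ n * g ^ n));
    [right; ring | apply Rmult_le_compat_r; [exact Hw|]].
  apply Rmult_le_compat; auto using pos_INR.
Qed.

End Perturbation.

Theorem lemmaB3 (Rr : R) (k : nat) (a b c d : T0 -> Cx) (eps : R) :
  1 <= Rr ->
  in_ball k Rr e_unit a -> in_BTM a ->
  in_ball k Rr e_unit b -> in_BTM b ->
  0 < eps -> eps < 1 ->
  wnorm k a + wnorm k b + 2 * eps < Rr ->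
  in_wspace k c -> in_wspace k d ->
  c None = C0 -> d None = C0 ->
  wnorm k c < eps -> wnorm k d < eps ->
  in_BTM (fadd a c) /\ in_BTM (fadd b d) /\
  forall tau : tree,
    Cmod (fsub (tm_prod (fadd a c) (fadd b d)) (tm_prod a b) (Some tau))
      <= 2 * eps * (4 * Rr) ^ (tsize tau) / omega k (Some tau).
Proof.
  intros HRr Ha HBa Hb HBb Heps0 Heps1 Hsum Hc Hd Hc0 Hd0 Hcn Hdn.
  split; [|split]; [eapply in_BTM_add; eauto .. |].
  intros tau.
  pose proof (in_ball_wbounded k Rr a Ha) as Wa.
  pose proof (in_ball_wbounded k Rr b Hb) as Wb.
  pose proof (wnorm_ge0 k a Wa); pose proof (wnorm_ge0 k b Wb).
  assert (Hg : 0 <= 2 ^ k) by (apply pow_le; lra).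
  unfold Rdiv; rewrite omega_inv.
  eapply Rle_trans; [apply (tm_prod_sub_le a _ b _ Rr eps (2 ^ k)); auto; try lra|].
  - intros t; apply (Cmod_le_weight k a Rr Wa); lra.
  - intros t; apply (Cmod_add_le_weight k a c Rr Wa (proj2 Hc) ltac:(lra) (Some t)).
  - intros t; unfold fadd; rewrite Csub_addl.
    apply (Cmod_le_weight k c eps (proj2 Hc)); lra.
  - intros t; apply (Cmod_le_weight k b Rr Wb); lra.
  - intros t; unfold fadd; rewrite Csub_addl.
    apply (Cmod_le_weight k d eps (proj2 Hd)); lra.
  - rewrite (proj1 (proj2 HBb)), Cmod_C1; lra.
  - unfold fadd; rewrite Hd0; apply Cx_ext; simpl; ring.
  - pose proof (pow_le (2 ^ k) (tsize tau) Hg).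
    pose proof (pow_le (4 * Rr) (tsize tau) ltac:(lra)).
    apply Rmult_le_compat_r; [assumption|].
    apply Rmult_le_compat_r; [assumption | lra].
Qed.
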